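(* Let $\mathbb{F}$ be a field. (i) Let $P(\lambda)=L(\lambda)R(\lambda)$ with $L\in\mathbb{F}[\lambda]^{m\times r}$ and $R\in\mathbb{F}[\lambda]^{r\times n}$. If $L$ is column reduced or $R$ is row reduced, then $\deg(P)=\max_{1\le i\le r}\{\deg(L_{*i})+\deg(R_{i*})\}$. (ii) Let $P(\lambda)=L(\lambda)E(\lambda)R(\lambda)$ with $L\in\mathbb{F}[\lambda]^{m\times r}$, $E=(e_{ij})\in\mathbb{F}[\lambda]^{r\times s}$, $R\in\mathbb{F}[\lambda]^{s\times n}$. If $L$ is column reduced and $R$ is row reduced, then $\deg(P)=\max_{1\le i\le r,\,1\le j\le s}\{\deg(L_{*i})+\deg(e_{ij})+\deg(R_{j*})\}$.
   Context: Degree of a polynomial vector/matrix: maximum degree of its entries, $\deg0=-\infty$. $L_{*i}$: $i$th column, $R_{i*}$: $i$th row. For $N\in\mathbb{F}[\lambda]^{m\times n}$ with column degrees $d'_1,\dots,d'_n$, the highest-column-degree coefficient matrix $N_{hc}$ is the constant matrix whose $j$th column is the coefficient of $\lambda^{d'_j}$ in the $j$th column of $N$; $N$ is column reduced if $N_{hc}$ has full column rank. Analogously, with row degrees $d_i$, $M_{hr}$ has as $i$th row the coefficient of $\lambda^{d_i}$ in the $i$th row of $M$, and $M$ is row reduced if $M_{hr}$ has full row rank. *)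

From HB Require Import structures.
From mathcomp Require Import all_boot all_order all_algebra.
Set Implicit Arguments. Unset Strict Implicit. Unset Printing Implicit Defensive.
Import GRing.Theory.
Local Open Scope ring_scope.

(* Extended degrees: [None] stands for -infinity (the degree of 0),
   [Some d] for the natural number d. *)
Definition edeg := option nat.

Definition eadd (a b : edeg) : edeg :=
  match a, b with Some x, Some y => Some (x + y)%N | _, _ => None end.

Definition emax (a b : edeg) : edeg :=
  match a, b with
  | Some x, Some y => Some (maxn x y)
  | None, b => b
  | a, None => a
  end.

Section PolyMatDeg.
Variable F : fieldType.

Definition pdeg (p : {poly F}) : edeg :=
  if p == 0 then None else Some (size p).-1.

Definition mxdeg m n (A : 'M[{poly F}]_(m, n)) : edeg :=
  \big[emax/None]_(i < m) \big[emax/None]_(j < n) pdeg (A i j).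

Definition coldeg m n (A : 'M[{poly F}]_(m, n)) (j : 'I_n) : edeg :=
  \big[emax/None]_(i < m) pdeg (A i j).
Definition rowdeg m n (A : 'M[{poly F}]_(m, n)) (i : 'I_m) : edeg :=
  \big[emax/None]_(j < n) pdeg (A i j).

(* natural-number column/row degrees used to pick coefficients; for a zero
   column (degree -oo) any index gives the zero column, we use 0 *)
Definition coldegn m n (A : 'M[{poly F}]_(m, n)) (j : 'I_n) : nat :=
  \max_(i < m) (size (A i j)).-1.
Definition rowdegn m n (A : 'M[{poly F}]_(m, n)) (i : 'I_m) : nat :=
  \max_(j < n) (size (A i j)).-1.

Definition hc_mx m n (A : 'M[{poly F}]_(m, n)) : 'M[F]_(m, n) :=
  \matrix_(i, j) (A i j)`_(coldegn A j).
Definition hr_mx m n (A : 'M[{poly F}]_(m, n)) : 'M[F]_(m, n) :=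
  \matrix_(i, j) (A i j)`_(rowdegn A i).

Definition column_reduced m n (A : 'M[{poly F}]_(m, n)) : Prop :=
  \rank (hc_mx A) = n.
Definition row_reduced m n (A : 'M[{poly F}]_(m, n)) : Prop :=
  \rank (hr_mx A) = m.

End PolyMatDeg.

(* Write d_i for the degree of the i-th column of L and D for the right-hand
   side.  Every entry of L R has degree at most D.  For the converse pick i0
   with d_i0 + deg R_{i0*} = D and an entry R_{i0 j0} of maximal degree in
   its row: the coefficient of lambda^D in the column j0 of L R is L_hc v,
   where v_i is the coefficient of lambda^(D - d_i) in R_{i j0}.  Since
   v_i0 is the leading coefficient of R_{i0 j0}, v is nonzero, and so is
   L_hc v because L_hc has full column rank.  The row reduced case follows
   by transposition, and (ii) by applying (i) twice to L (E R). *)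

From HB Require Import structures.
From mathcomp Require Import all_boot all_order all_algebra.
From mathcomp Require Import zify.
Set Implicit Arguments. Unset Strict Implicit. Unset Printing Implicit Defensive.
Import GRing.Theory.
Local Open Scope ring_scope.

Lemma emaxA : associative emax.
Proof. by case=> [x|] [y|] [z|] //=; rewrite maxnA. Qed.

Lemma emaxC : commutative emax.
Proof. by case=> [x|] [y|] //=; rewrite maxnC. Qed.

Lemma emaxNn : left_id None emax.
Proof. by []. Qed.

HB.instance Definition _ :=
  Monoid.isComLaw.Build edeg None emax emaxA emaxC emaxNn.

(* Extended degrees are handled through the polynomial-size convention:
   -oo has size 0 and a degree d has size d + 1. *)
Definition esize (a : edeg) : nat := if a is Some d then d.+1 else 0%N.

Lemma esize_inj : injective esize.
Proof. by case=> [x|] [y|] //= [->]. Qed.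

Lemma esize_emax : {morph esize : a b / emax a b >-> maxn a b}.
Proof. by case=> [x|] [y|] //=; rewrite ?maxnSS ?maxn0 ?max0n. Qed.

Lemma esize_big (I : Type) (r : seq I) (P : pred I) (f : I -> edeg) :
  esize (\big[emax/None]_(i <- r | P i) f i) =
  (\max_(i <- r | P i) esize (f i))%N.
Proof. exact: (big_morph esize esize_emax). Qed.

Lemma predn_maxn : {morph predn : x y / maxn x y}.
Proof. by move=> x y; lia. Qed.

Definition mulsize (a b : nat) : nat :=
  if (a == 0%N) || (b == 0%N) then 0%N else (a + b).-1.

Lemma mulsizeE a b : (0 < a)%N -> (0 < b)%N -> mulsize a b = (a + b).-1.
Proof. by rewrite /mulsize !lt0n => /negbTE-> /negbTE->. Qed.

Lemma esize_eadd a b : esize (eadd a b) = mulsize (esize a) (esize b).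
Proof. by case: a => [x|]; case: b => [y|] //=; rewrite /mulsize /=; lia. Qed.

Lemma eaddA : associative eadd.
Proof. by case=> [x|] [y|] [z|] //=; rewrite addnA. Qed.

Lemma eaddC : commutative eadd.
Proof. by case=> [x|] [y|] //=; rewrite addnC. Qed.

Lemma eadd_bigr (I : Type) (r : seq I) (P : pred I) a (f : I -> edeg) :
  eadd a (\big[emax/None]_(i <- r | P i) f i) =
  \big[emax/None]_(i <- r | P i) eadd a (f i).
Proof.
case: a => [x|]; last by elim/big_rec2: _ => // i y z _ <-.
by apply: (big_morph (eadd (Some x))) => // [[y|] [z|]] //=; rewrite addn_maxr.
Qed.

Lemma exists_eq_bigmax (I : finType) (f : I -> nat) :
  (0 < \max_i f i)%N -> exists i, (\max_i f i)%N = f i.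
Proof.
case: (pickP (@predT I)) => [i _ _|I0]; last by rewrite big_pred0.
have [|j ->] := @eq_bigmax I f; first by apply/card_gt0P; exists i.
by exists j.
Qed.

Section PolyMatrixDegree.
Variable F : fieldType.
Implicit Types p q : {poly F}.

Lemma esize_pdeg p : esize (pdeg p) = size p.
Proof.
rewrite /pdeg; have [->|/negbTE p0] := eqVneq p 0; first by rewrite size_poly0.
by rewrite /= prednK // size_poly_gt0 p0.
Qed.

Lemma size_mul_mulsize p q a b : (size p <= a)%N -> (size q <= b)%N ->
  (size (p * q)%R <= mulsize a b)%N.
Proof.
rewrite /mulsize; have [-> | a0] := eqVneq a 0%N.
  by rewrite leqn0 size_poly_eq0 => /eqP->; rewrite mul0r size_poly0.
have [-> | b0] := eqVneq b 0%N.
  by move=> _; rewrite leqn0 size_poly_eq0 => /eqP->; rewrite mulr0 size_poly0.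
move=> sp sq; apply: leq_trans (size_polyMleq p q) _; lia.
Qed.

Lemma coefM_size p q d e : (size p <= d.+1)%N -> (size q <= e.+1)%N ->
  (p * q)`_(d + e) = p`_d * q`_e.
Proof.
move=> sp sq; have d_lt : (d < (d + e).+1)%N by rewrite ltnS leq_addr.
rewrite coefM (bigD1 (Ordinal d_lt)) //= addKn.
rewrite big1 ?addr0 // => j; rewrite -val_eqE /= => /eqP jd.
have [jlt|jgt] := ltnP j d.
  by rewrite [q`_ _]nth_default ?mulr0 // (leq_trans sq) //; lia.
by rewrite [p`_ _]nth_default ?mul0r // (leq_trans sp) //; lia.
Qed.

Section Degrees.
Variables m n : nat.
Implicit Type A : 'M[{poly F}]_(m, n).

Lemma esize_mxdeg A :
  esize (mxdeg A) = (\max_(i < m) \max_(j < n) size (A i j))%N.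
Proof.
rewrite /mxdeg esize_big; apply: eq_bigr => i _.
by rewrite esize_big; apply: eq_bigr => j _; rewrite esize_pdeg.
Qed.

Lemma esize_coldeg A j : esize (coldeg A j) = (\max_(i < m) size (A i j))%N.
Proof.
by rewrite /coldeg esize_big; apply: eq_bigr => i _; rewrite esize_pdeg.
Qed.

Lemma esize_rowdeg A i : esize (rowdeg A i) = (\max_(j < n) size (A i j))%N.
Proof.
by rewrite /rowdeg esize_big; apply: eq_bigr => j _; rewrite esize_pdeg.
Qed.

Lemma size_le_coldeg A i j : (size (A i j) <= esize (coldeg A j))%N.
Proof. by rewrite esize_coldeg (@leq_bigmax _ (fun i => size (A i j))). Qed.

Lemma size_le_rowdeg A i j : (size (A i j) <= esize (rowdeg A i))%N.
Proof. by rewrite esize_rowdeg (@leq_bigmax _ (fun j => size (A i j))). Qed.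

Lemma coldegnE A j : coldegn A j = (esize (coldeg A j)).-1.
Proof.
rewrite esize_coldeg /coldegn.
by rewrite (big_morph predn predn_maxn (erefl 0%N : 0%N.-1 = 0%N)).
Qed.

Lemma coldeg_tr A j : coldeg A^T j = rowdeg A j.
Proof. by apply: eq_bigr => i _; rewrite mxE. Qed.

Lemma rowdeg_tr A i : rowdeg A^T i = coldeg A i.
Proof. by apply: eq_bigr => j _; rewrite mxE. Qed.

Lemma mxdeg_tr A : mxdeg A^T = mxdeg A.
Proof.
rewrite /mxdeg exchange_big.
by apply: eq_bigr => i _; apply: eq_bigr => j _; rewrite mxE.
Qed.

Lemma column_reduced_tr A : column_reduced A^T <-> row_reduced A.
Proof.
rewrite /column_reduced /row_reduced; have -> : hc_mx A^T = (hr_mx A)^T.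
  apply/matrixP => j i; rewrite !mxE; congr (_`_ _).
  by apply: eq_bigr => k _; rewrite mxE.
by rewrite mxrank_tr.
Qed.

Lemma rowdeg_row A i : rowdeg A i = mxdeg (row i A).
Proof.
by rewrite /mxdeg big_ord1; apply: eq_bigr => j _; rewrite mxE.
Qed.

Lemma coldeg_row A i j : coldeg (row i A) j = pdeg (A i j).
Proof. by rewrite /coldeg big_ord1 mxE. Qed.

End Degrees.

Section ColumnReduced.
Variables m r n : nat.
Variables (L : 'M[{poly F}]_(m, r)) (R : 'M[{poly F}]_(r, n)).

Lemma mxdeg_mul_le :
  (esize (mxdeg (L *m R)) <=
   \max_(i < r) mulsize (esize (coldeg L i)) (esize (rowdeg R i)))%N.
Proof.
rewrite esize_mxdeg; apply/bigmax_leqP => k _; apply/bigmax_leqP => j _.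
rewrite mxE; apply: leq_trans (size_sum _ _ _) _; apply/bigmax_leqP => i _.
apply: leq_trans (@leq_bigmax _ (fun i => mulsize _ _) i).
exact: size_mul_mulsize (size_le_coldeg _ _ _) (size_le_rowdeg _ _ _).
Qed.

Lemma coef_mulmx_hc_mx (D : nat) (j : 'I_n) :
  (forall i, R i j != 0 -> (coldegn L i + size (R i j) <= D.+1)%N) ->
  forall k, ((L *m R) k j)`_D =
            (hc_mx L *m \col_i (R i j)`_(D - coldegn L i)) k 0.
Proof.
move=> deg_le k; rewrite !mxE coef_sum; apply: eq_bigr => i _; rewrite !mxE.
have [-> | Rij] := eqVneq (R i j) 0; first by rewrite mulr0 !coef0 mulr0.
have le_D := deg_le i Rij; rewrite -size_poly_gt0 in Rij.
have sL : (size (L k i) <= (coldegn L i).+1)%N.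
  by rewrite coldegnE (leq_trans (size_le_coldeg L k i)) ?leqSpred.
rewrite -{1}[D](@subnKC (coldegn L i)); last by lia.
apply: coefM_size => //; move: (size (R i j)) le_D Rij => s; lia.
Qed.

Hypothesis L_reduced : column_reduced L.

Let hc_mx_mul_eq0 (p : nat) (v : 'M_(r, p)) : hc_mx L *m v = 0 -> v = 0.
Proof.
have hc_full : row_full (hc_mx L) by rewrite /row_full L_reduced.
by move=> Lv0; apply: (row_full_inj hc_full); rewrite Lv0 mulmx0.
Qed.

Lemma coldeg_col_reduced_gt0 i : (0 < esize (coldeg L i))%N.
Proof.
rewrite lt0n; apply/negP => /eqP c0.
have Li0 k : L k i = 0.
  by apply/eqP; rewrite -size_poly_eq0 -leqn0 -c0 size_le_coldeg.
have /matrixP/(_ i 0)/eqP : delta_mx i 0 = 0 :> 'cV[F]_r.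
  apply: hc_mx_mul_eq0; apply/matrixP => k l.
  rewrite !mxE (bigD1 i) //= big1 => [|i' /negbTE ii'].
    by rewrite !mxE Li0 coef0 mul0r addr0.
  by rewrite !mxE ii' mulr0.
by rewrite !mxE !eqxx oner_eq0.
Qed.

Lemma mxdeg_mul_col_reduced_ge :
  (\max_(i < r) mulsize (esize (coldeg L i)) (esize (rowdeg R i)) <=
   esize (mxdeg (L *m R)))%N.
Proof.
pose c i := esize (coldeg L i).
pose N := (\max_(i < r) mulsize (c i) (esize (rowdeg R i)))%N.
change (N <= esize (mxdeg (L *m R)))%N.
have [-> // | N_gt0] := posnP N.
have [i0 Ni0] : exists i0, N = mulsize (c i0) (esize (rowdeg R i0)).
  exact: exists_eq_bigmax.
have c_gt0 := coldeg_col_reduced_gt0.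
have r0_gt0 : (0 < esize (rowdeg R i0))%N.
  by rewrite lt0n; apply: contraTneq N_gt0 => r0; rewrite Ni0 /mulsize r0 orbT.
have [j0 Rj0] : exists j0, esize (rowdeg R i0) = size (R i0 j0).
  by rewrite esize_rowdeg; apply: exists_eq_bigmax; rewrite -esize_rowdeg.
have deg_le i : R i j0 != 0 -> (coldegn L i + size (R i j0) <= N.-1.+1)%N.
  rewrite -size_poly_gt0 (prednK N_gt0) coldegnE -/(c i) => Rij0_gt0.
  have sR := size_le_rowdeg R i j0.
  have le_N : (mulsize (c i) (esize (rowdeg R i)) <= N)%N.
    exact: (@leq_bigmax _ (fun i => mulsize (c i) (esize (rowdeg R i))) i).
  rewrite mulsizeE ?c_gt0 ?(leq_trans Rij0_gt0 sR) // in le_N.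
  by have := c_gt0 i; rewrite -/(c i); lia.
pose v : 'cV[F]_r := \col_i (R i j0)`_(N.-1 - coldegn L i).
have v_i0 : v i0 0 != 0.
  rewrite mxE coldegnE -/(c i0).
  have -> : (N.-1 - (c i0).-1 = (size (R i0 j0)).-1)%N.
    rewrite Ni0 mulsizeE ?c_gt0 // Rj0.
    by have := c_gt0 i0; rewrite -/(c i0); lia.
  by rewrite -lead_coefE lead_coef_eq0 -size_poly_gt0 -Rj0.
have [k Lv_k] : exists k, (hc_mx L *m v) k 0 != 0.
  apply/existsP; rewrite -negb_forall; apply: contra v_i0 => /forallP Lv0.
  suff -> : v = 0 by rewrite mxE.
  by apply/hc_mx_mul_eq0/matrixP => a b; rewrite ord1 [RHS]mxE; apply/eqP.
rewrite -coef_mulmx_hc_mx // in Lv_k; rewrite esize_mxdeg -(prednK N_gt0).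
apply: leq_trans (@leq_bigmax _ (fun k => \max_(j < n) size ((L *m R) k j)) k).
apply: leq_trans (@leq_bigmax _ (fun j => size ((L *m R) k j)) j0).
by rewrite ltnNge; apply: contra Lv_k => /(nth_default 0) ->.
Qed.

Lemma mxdeg_mul_col_reduced :
  mxdeg (L *m R) = \big[emax/None]_(i < r) eadd (coldeg L i) (rowdeg R i).
Proof.
apply: esize_inj; rewrite [RHS]esize_big.
under [RHS]eq_bigr do rewrite esize_eadd.
by apply/eqP; rewrite eqn_leq mxdeg_mul_le mxdeg_mul_col_reduced_ge.
Qed.

End ColumnReduced.

Lemma mxdeg_mul_row_reduced m r n
    (L : 'M[{poly F}]_(m, r)) (R : 'M[{poly F}]_(r, n)) : row_reduced R ->
  mxdeg (L *m R) = \big[emax/None]_(i < r) eadd (coldeg L i) (rowdeg R i).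
Proof.
move/column_reduced_tr => RT_reduced.
rewrite -mxdeg_tr trmx_mul mxdeg_mul_col_reduced //.
by apply: eq_bigr => i _; rewrite coldeg_tr rowdeg_tr eaddC.
Qed.

Lemma rowdeg_mul_row_reduced r s n
    (E : 'M[{poly F}]_(r, s)) (R : 'M[{poly F}]_(s, n)) i : row_reduced R ->
  rowdeg (E *m R) i = \big[emax/None]_(j < s) eadd (pdeg (E i j)) (rowdeg R j).
Proof.
move=> R_reduced; rewrite rowdeg_row row_mul mxdeg_mul_row_reduced //.
by apply: eq_bigr => j _; rewrite coldeg_row.
Qed.

End PolyMatrixDegree.

Theorem corollary3p17 (F : fieldType) :
  (forall (m r n : nat) (L : 'M[{poly F}]_(m, r)) (R : 'M[{poly F}]_(r, n)),
     column_reduced L \/ row_reduced R ->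
     mxdeg (L *m R) =
       \big[emax/None]_(i < r) eadd (coldeg L i) (rowdeg R i))
  /\
  (forall (m r s n : nat) (L : 'M[{poly F}]_(m, r)) (E : 'M[{poly F}]_(r, s))
          (R : 'M[{poly F}]_(s, n)),
     column_reduced L -> row_reduced R ->
     mxdeg (L *m E *m R) =
       \big[emax/None]_(i < r) \big[emax/None]_(j < s)
          eadd (eadd (coldeg L i) (pdeg (E i j))) (rowdeg R j)).
Proof.
split=> [m r n L R [L_reduced | R_reduced] | m r s n L E R L_reduced R_reduced].
- exact: mxdeg_mul_col_reduced.
- exact: mxdeg_mul_row_reduced.
rewrite -mulmxA mxdeg_mul_col_reduced //; apply: eq_bigr => i _.
rewrite rowdeg_mul_row_reduced // eadd_bigr.
by apply: eq_bigr => j _; rewrite eaddA.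
Qed.
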